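(* Let $\langle X, d\rangle$ be a metric space. The following conditions are equivalent: (1) $X$ is cofinally Bourbaki quasi-complete; (2) $X$ is strongly uniformly locally bounded and, for every metric space $\langle Y,\rho\rangle$, every locally Lipschitz function $f: X\to Y$ is strongly uniformly locally Lipschitz; (3) $X$ is strongly uniformly locally bounded and every real-valued locally Lipschitz function on $X$ is strongly uniformly locally Lipschitz; (4) $X$ is strongly uniformly locally bounded and the real-valued strongly uniformly locally Lipschitz functions on $X$ are uniformly dense in $C(X,\mathbb{R})$, the set of all real-valued continuous functions on $X$.
   Context: For $\varepsilon>0$ and $x,y\in X$, an $\varepsilon$-chain from $x$ to $y$ is a finite sequence $x=x_0,x_1,\dots,x_n=y$ in $X$ with $d(x_{i-1},x_i)<\varepsilon$ for all $i$. The $\varepsilon$-chainable component $S^\infty_d(x,\varepsilon)$ is the set of all $y\in X$ that can be joined to $x$ by an $\varepsilon$-chain. A sequence $\langle x_n\rangle$ in $X$ is cofinally Bourbaki quasi-Cauchy if for every $\varepsilon>0$ there is an infinite set $N_\varepsilon\subseteq\mathbb{N}$ such that for all $j,k\in N_\varepsilon$, $x_j$ and $x_k$ can be joined by an $\varepsilon$-chain. $X$ is cofinally Bourbaki quasi-complete if every cofinally Bourbaki quasi-Cauchy sequence in $X$ has a cluster point. $X$ is strongly uniformly locally bounded if there is $\delta>0$ such that $S^\infty_d(x,\delta)$ is a bounded subset of $X$ for every $x\in X$. A function $f:X\to Y$ into a metric space $\langle Y,\rho\rangle$ is locally Lipschitz if each $x\in X$ has a ball $S_d(x,\delta_x)$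 on which $f$ is Lipschitz; $f$ is strongly uniformly locally Lipschitz (also called uniformly locally chain-Lipschitz) if there exists $\delta>0$ such that for each $x\in X$ the restriction of $f$ to $S^\infty_d(x,\delta)$ is Lipschitz (the Lipschitz constant may depend on $x$). Uniform density means density with respect to uniform (sup-norm) convergence. *)

From Stdlib Require Import Reals Lra.
Open Scope R_scope.

Definition is_metric {X : Type} (d : X -> X -> R) : Prop :=
  (forall x y, 0 <= d x y) /\
  (forall x y, d x y = 0 <-> x = y) /\
  (forall x y, d x y = d y x) /\
  (forall x y z, d x z <= d x y + d y z).

Definition Rmetric (a b : R) : R := Rabs (a - b).

Definition eps_chain {X : Type} (d : X -> X -> R) (eps : R) (x y : X) : Prop :=
  exists (n : nat) (s : nat -> X),
    s 0%nat = x /\ s n = y /\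
    (forall i : nat, (i < n)%nat -> d (s i) (s (S i)) < eps).

Definition chain_comp {X : Type} (d : X -> X -> R) (x : X) (eps : R) : X -> Prop :=
  fun y => eps_chain d eps x y.

Definition ball_d {X : Type} (d : X -> X -> R) (x : X) (delta : R) : X -> Prop :=
  fun y => d x y < delta.

Definition bounded_set {X : Type} (d : X -> X -> R) (A : X -> Prop) : Prop :=
  exists M : R, forall a b, A a -> A b -> d a b <= M.

Definition infinite_nat_set (N : nat -> Prop) : Prop :=
  forall m : nat, exists n : nat, (m <= n)%nat /\ N n.

Definition cofinally_BQC_seq {X : Type} (d : X -> X -> R) (x : nat -> X) : Prop :=
  forall eps : R, 0 < eps ->
    exists N : nat -> Prop, infinite_nat_set N /\
      forall j k : nat, N j -> N k -> eps_chain d eps (x j) (x k).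

Definition cluster_point {X : Type} (d : X -> X -> R) (x : nat -> X) (p : X) : Prop :=
  forall eps : R, 0 < eps -> forall m : nat, exists n : nat, (m <= n)%nat /\ d (x n) p < eps.

Definition cofinally_BQ_complete {X : Type} (d : X -> X -> R) : Prop :=
  forall x : nat -> X, cofinally_BQC_seq d x -> exists p : X, cluster_point d x p.

Definition strongly_unif_loc_bounded {X : Type} (d : X -> X -> R) : Prop :=
  exists delta : R, 0 < delta /\ forall x : X, bounded_set d (chain_comp d x delta).

Definition lipschitz_on {X Y : Type} (d : X -> X -> R) (rho : Y -> Y -> R)
  (f : X -> Y) (A : X -> Prop) : Prop :=
  exists K : R, 0 <= K /\ forall a b, A a -> A b -> rho (f a) (f b) <= K * d a b.

Definition locally_lipschitz {X Y : Type} (d : X -> X -> R) (rho : Y -> Y -> R)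
  (f : X -> Y) : Prop :=
  forall x : X, exists delta : R, 0 < delta /\ lipschitz_on d rho f (ball_d d x delta).

Definition strongly_unif_loc_lipschitz {X Y : Type} (d : X -> X -> R) (rho : Y -> Y -> R)
  (f : X -> Y) : Prop :=
  exists delta : R, 0 < delta /\ forall x : X, lipschitz_on d rho f (chain_comp d x delta).

Definition continuous_d {X : Type} (d : X -> X -> R) (f : X -> R) : Prop :=
  forall x : X, forall eps : R, 0 < eps ->
    exists delta : R, 0 < delta /\ forall y : X, d x y < delta -> Rabs (f y - f x) < eps.

Definition SULL_uniformly_dense {X : Type} (d : X -> X -> R) : Prop :=
  forall f : X -> R, continuous_d d f ->
    forall eps : R, 0 < eps ->
      exists g : X -> R, strongly_unif_loc_lipschitz d Rmetric g /\
        forall x : X, Rabs (f x - g x) < eps.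

From Stdlib Require Import Reals Lra Lia Classical ClassicalEpsilon Cantor.
Open Scope R_scope.

(* (1) => (2): if chain components of every scale [1/(n+1)] contain badly
   behaved points (far from a base point, or where [f] is steep), pick such
   points in a single [1/(n+1)]-component for each [n] and enumerate them along
   a pairing of [nat * nat]. The resulting sequence is cofinally Bourbaki
   quasi-Cauchy, and local boundedness (resp. the local Lipschitz property) at
   its cluster point gives a contradiction. (2) => (3) is a specialisation, and
   (1) => (4) holds because locally Lipschitz functions are uniformly dense in
   C(X, R) on any metric space: round [f] to the levels [k e] and interpolate
   between consecutive level sets with Urysohn functions built from distances.
   Conversely, a cofinally quasi-Cauchy sequence [x] without cluster point
   carries a locally finite sum of tents [F] with [F (x j) >= j]; but any
   strongly uniformly locally Lipschitz function within [1] of [F] is bounded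
   on a cofinal part of [x], which lies in one bounded chain component. *)

Lemma inv_INR_S_pos (n : nat) : 0 < / INR (S n).
Proof. apply Rinv_0_lt_compat, lt_0_INR; lia. Qed.

Lemma inv_INR_S_eventually_lt (eps : R) :
  0 < eps -> exists N : nat, forall n, (N <= n)%nat -> / INR (S n) < eps.
Proof.
  intros Heps. destruct (archimed_cor1 eps Heps) as [N [HN HN0]].
  exists N. intros n Hn. eapply Rle_lt_trans; [|exact HN].
  apply Rinv_le_contravar; [apply lt_0_INR; lia | apply le_INR; lia].
Qed.

Lemma INR_eventually_gt (A : R) : exists N : nat, forall n, (N <= n)%nat -> A < INR n.
Proof.
  destruct (INR_unbounded A) as [N HN]. exists N. intros n Hn.
  apply le_INR in Hn. lra.
Qed.

Lemma sum_f_R0_stable (u : nat -> R) (A : nat) :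
  (forall j, (A < j)%nat -> u j = 0) -> forall B, (A <= B)%nat -> sum_f_R0 u B = sum_f_R0 u A.
Proof.
  intros Hu B HB. induction HB as [|B HB IH]; [reflexivity|].
  simpl. rewrite IH, (Hu (S B)) by lia. ring.
Qed.

Lemma sum_f_R0_ge_term (u : nat -> R) (N j : nat) :
  (forall i, 0 <= u i) -> (j <= N)%nat -> u j <= sum_f_R0 u N.
Proof.
  intros Hu HjN. induction HjN as [|N HjN IH].
  - destruct j; simpl; [lra|]. pose proof (cond_pos_sum u j Hu). lra.
  - simpl. pose proof (Hu (S N)). lra.
Qed.

Lemma Rabs_Rmax_0_sub_le (u v : R) : Rabs (Rmax 0 u - Rmax 0 v) <= Rabs (u - v).
Proof.
  unfold Rmax. destruct (Rle_dec 0 u), (Rle_dec 0 v); apply Rabs_le;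
  unfold Rabs; destruct (Rcase_abs (u - v)); lra.
Qed.

Lemma Rabs_ratio_diff_le (u v u' v' h t : R) :
  0 <= u -> 0 <= v -> 0 <= u' -> 0 <= v' -> 0 < h -> h <= u + v -> h <= u' + v' ->
  Rabs (u - u') <= t -> Rabs (v - v') <= t ->
  Rabs (u / (u + v) - u' / (u' + v')) <= t / h.
Proof.
  intros Hu Hv Hu' Hv' Hh HP HQ Htu Htv.
  replace (u / (u + v) - u' / (u' + v')) with
    ((u * (v' - v) + v * (u - u')) / ((u + v) * (u' + v'))) by (field; split; lra).
  set (P := u + v) in *. set (Q := u' + v') in *.
  assert (Ht : 0 <= t) by (pose proof (Rabs_pos (u - u')); lra).
  assert (Hnum : Rabs (u * (v' - v) + v * (u - u')) <= P * t).
  { eapply Rle_trans; [apply Rabs_triang|].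
    rewrite !Rabs_mult, (Rabs_right u), (Rabs_right v), (Rabs_minus_sym v') by lra.
    unfold P. pose proof (Rmult_le_compat_l u _ _ Hu Htv). pose proof (Rmult_le_compat_l v _ _ Hv Htu).
    lra. }
  unfold Rdiv. rewrite Rabs_mult, Rabs_inv, (Rabs_right (P * Q)) by nra.
  apply Rle_trans with (P * t * / (P * Q)).
  { apply Rmult_le_compat_r; [left; apply Rinv_0_lt_compat; nra | exact Hnum]. }
  replace (P * t * / (P * Q)) with (t * / Q) by (field; lra).
  apply Rmult_le_compat_l; [exact Ht|]. apply Rinv_le_contravar; lra.
Qed.

Lemma Rmetric_is_metric : is_metric Rmetric.
Proof.
  unfold is_metric, Rmetric. split; [|split; [|split]].
  - intros; apply Rabs_pos.
  - intros a b. split; intros H.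
    + destruct (Req_dec (a - b) 0) as [E|E]; [lra|].
      exfalso. exact (Rabs_no_R0 _ E H).
    + subst. rewrite Rminus_diag, Rabs_R0. reflexivity.
  - intros. apply Rabs_minus_sym.
  - intros a b c. replace (a - c) with ((a - b) + (b - c)) by ring. apply Rabs_triang.
Qed.

Section MetricAxioms.
Context {X : Type} {d : X -> X -> R} (hd : is_metric d).

Lemma metric_nonneg x y : 0 <= d x y.
Proof. apply (proj1 hd). Qed.

Lemma metric_diag x : d x x = 0.
Proof. apply (proj1 (proj2 hd)). reflexivity. Qed.

Lemma metric_sym x y : d x y = d y x.
Proof. apply (proj1 (proj2 (proj2 hd))). Qed.

Lemma metric_triangle x y z : d x z <= d x y + d y z.
Proof. apply (proj2 (proj2 (proj2 hd))). Qed.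

Lemma metric_dist_diff_le x y z : Rabs (d x z - d y z) <= d x y.
Proof.
  pose proof (metric_triangle x y z). pose proof (metric_triangle y x z).
  rewrite (metric_sym y x) in *. apply Rabs_le. lra.
Qed.

End MetricAxioms.

Section Metric.
Context {X : Type} (d : X -> X -> R) (hd : is_metric d).

Lemma eps_chain_refl eps x : eps_chain d eps x x.
Proof. exists 0%nat, (fun _ => x). repeat split; intros; lia. Qed.

Lemma eps_chain_le eps eps' x y : eps <= eps' -> eps_chain d eps x y -> eps_chain d eps' x y.
Proof.
  intros Hle [n [s [H0 [Hn Hs]]]]. exists n, s. repeat split; auto.
  intros i Hi. specialize (Hs i Hi). lra.
Qed.

Lemma eps_chain_trans eps x y z :
  eps_chain d eps x y -> eps_chain d eps y z -> eps_chain d eps x z.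
Proof.
  intros [n [s [Hs0 [Hsn Hs]]]] [m [t [Ht0 [Htm Ht]]]].
  exists (n + m)%nat, (fun i => if Nat.leb i n then s i else t (i - n)%nat).
  repeat split.
  - exact Hs0.
  - destruct (Nat.leb_spec (n + m) n).
    + replace m with 0%nat in * by lia. rewrite Nat.add_0_r, Hsn, <- Htm, Ht0. reflexivity.
    + replace (n + m - n)%nat with m by lia. exact Htm.
  - intros i Hi.
    destruct (Nat.leb_spec i n), (Nat.leb_spec (S i) n).
    + apply Hs. lia.
    + replace i with n by lia. replace (S n - n)%nat with 1%nat by lia.
      rewrite Hsn, <- Ht0. apply Ht. lia.
    + lia.
    + replace (S i - n)%nat with (S (i - n)) by lia. apply Ht. lia.
Qed.

Lemma eps_chain_sym eps x y : eps_chain d eps x y -> eps_chain d eps y x.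
Proof.
  intros [n [s [Hs0 [Hsn Hs]]]].
  exists n, (fun i => s (n - i)%nat). repeat split.
  - rewrite Nat.sub_0_r. exact Hsn.
  - rewrite Nat.sub_diag. exact Hs0.
  - intros i Hi. rewrite (metric_sym hd). replace (n - i)%nat with (S (n - S i)) by lia.
    apply Hs. lia.
Qed.

Lemma not_bounded_set_far (A : X -> Prop) :
  ~ bounded_set d A -> forall c L, exists z, A z /\ L <= d c z.
Proof.
  intros HA c L. apply NNPP. intros Hfar. apply HA.
  exists (2 * L). intros a b Ha Hb.
  assert (Hnear : forall z, A z -> d c z < L).
  { intros z Hz. apply Rnot_le_lt. intros HL. apply Hfar. exists z. auto. }
  pose proof (Hnear a Ha). pose proof (Hnear b Hb).
  pose proof (metric_triangle hd a c b). rewrite (metric_sym hd a c) in *. lra.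
Qed.

Lemma lipschitz_on_of_small_scale {Y : Type} (rho : Y -> Y -> R) (f : X -> Y)
    (A : X -> Prop) (K M delta : R) :
  0 < delta -> 0 <= K -> 0 <= M ->
  (forall a b, A a -> A b -> d a b < delta -> rho (f a) (f b) <= K * d a b) ->
  (forall a b, A a -> A b -> rho (f a) (f b) <= M) ->
  lipschitz_on d rho f A.
Proof.
  intros Hdelta HK HM Hsmall Hbound.
  assert (0 <= M / delta) by (unfold Rdiv; apply Rmult_le_pos; [lra | left; apply Rinv_0_lt_compat; lra]).
  exists (K + M / delta). split; [lra|].
  intros a b Ha Hb. pose proof (metric_nonneg hd a b).
  destruct (Rlt_or_le (d a b) delta) as [Hab|Hab].
  - specialize (Hsmall a b Ha Hb Hab). nra.
  - specialize (Hbound a b Ha Hb).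
    assert (M <= M / delta * d a b).
    { replace M with (M / delta * delta) at 1 by (field; lra).
      apply Rmult_le_compat_l; assumption. }
    nra.
Qed.

Lemma not_lipschitz_on_steep_or_far {Y : Type} (rho : Y -> Y -> R) (hrho : is_metric rho)
    (f : X -> Y) (A : X -> Prop) (c : Y) (L : nat) :
  ~ lipschitz_on d rho f A ->
  exists z, A z /\
    ((exists b, d z b < / INR (S L) /\ INR (S L) * d z b < rho (f z) (f b))
     \/ INR L <= rho c (f z)).
Proof.
  intros Hnot. apply NNPP. intros Hno. apply Hnot.
  apply (lipschitz_on_of_small_scale rho f A (INR (S L)) (2 * INR L) (/ INR (S L))).
  - apply inv_INR_S_pos.
  - apply pos_INR.
  - pose proof (pos_INR L). lra.
  - intros a b Ha _ Hab. apply Rnot_lt_le. intros Hlt.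
    apply Hno. exists a. split; [exact Ha|]. left. exists b. auto.
  - assert (Hnear : forall a, A a -> rho c (f a) < INR L).
    { intros a Ha. apply Rnot_le_lt. intros Hle. apply Hno. exists a. auto. }
    intros a b Ha Hb. pose proof (Hnear a Ha). pose proof (Hnear b Hb).
    pose proof (metric_triangle hrho (f a) c (f b)).
    rewrite (metric_sym hrho (f a) c) in *. lra.
Qed.

Lemma not_uniform_witnesses (Q : R -> X -> Prop) :
  ~ (exists delta, 0 < delta /\ forall x, Q delta x) ->
  exists y : nat -> X, forall n, ~ Q (/ INR (S n)) (y n).
Proof.
  intros Hn. apply (choice (fun n y => ~ Q (/ INR (S n)) y)). intros n.
  apply not_all_ex_not. intros Hall. apply Hn.
  exists (/ INR (S n)). split; [apply inv_INR_S_pos | exact Hall].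
Qed.

(* Enumerate the family along Cantor's pairing of [nat * nat]: the indices of
   row [n] form an infinite set whose terms are [1/(n+1)]-chained through [y n]. *)
Lemma cofinally_BQ_complete_diagonal (y : nat -> X) (P : X -> nat -> Prop) :
  cofinally_BQ_complete d ->
  (forall n L, exists z, eps_chain d (/ INR (S n)) (y n) z /\ P z L) ->
  exists p, forall L0 r, 0 < r -> exists z L, (L0 <= L)%nat /\ d z p < r /\ P z L.
Proof.
  intros HP Hrows.
  destruct (choice (fun nL z => eps_chain d (/ INR (S (fst nL))) (y (fst nL)) z /\ P z (snd nL)))
    as [z Hz].
  { intros [n L]. apply Hrows. }
  set (x k := z (fst (of_nat k), k)).
  destruct (HP x) as [p Hp].
  - intros eps Heps. destruct (inv_INR_S_eventually_lt eps Heps) as [n Hn].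
    exists (fun k => fst (of_nat k) = n). split.
    + intros m. exists (to_nat (n, m)). rewrite cancel_of_to.
      pose proof (to_nat_non_decreasing n m). split; [lia | reflexivity].
    + intros j k Hj Hk.
      destruct (Hz (fst (of_nat j), j)) as [Hzj _], (Hz (fst (of_nat k), k)) as [Hzk _].
      simpl in Hzj, Hzk. unfold x. rewrite Hj in Hzj |- *. rewrite Hk in Hzk |- *.
      apply eps_chain_le with (/ INR (S n)); [left; apply Hn; lia|].
      apply eps_chain_trans with (y n); [apply eps_chain_sym|]; assumption.
  - exists p. intros L0 r Hr. destruct (Hp r Hr L0) as [k [Hk Hxk]].
    exists (x k), k. split; [|split]; auto. apply (Hz (fst (of_nat k), k)).
Qed.

Lemma cofinally_BQ_complete_SULB :
  cofinally_BQ_complete d -> strongly_unif_loc_bounded d.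
Proof.
  intros HP. apply NNPP. intros Hn.
  destruct (not_uniform_witnesses _ Hn) as [y Hy].
  destruct (cofinally_BQ_complete_diagonal y (fun z L => INR L <= d (y 0%nat) z) HP)
    as [p Hp].
  { intros n L. exact (not_bounded_set_far _ (Hy n) (y 0%nat) (INR L)). }
  destruct (INR_eventually_gt (d (y 0%nat) p + 1)) as [L0 HL0].
  destruct (Hp L0 1 Rlt_0_1) as [z [L [HL [Hzp Hz]]]].
  specialize (HL0 L HL). pose proof (metric_triangle hd (y 0%nat) p z).
  rewrite (metric_sym hd p z) in *. lra.
Qed.

Lemma cofinally_BQ_complete_SULL :
  cofinally_BQ_complete d ->
  forall (Y : Type) (rho : Y -> Y -> R), is_metric rho ->
  forall f : X -> Y, locally_lipschitz d rho f -> strongly_unif_loc_lipschitz d rho f.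
Proof.
  intros HP Y rho hrho f Hf. apply NNPP. intros Hn.
  destruct (not_uniform_witnesses _ Hn) as [y Hy].
  set (c := f (y 0%nat)).
  destruct (cofinally_BQ_complete_diagonal y
     (fun z L => (exists b, d z b < / INR (S L) /\ INR (S L) * d z b < rho (f z) (f b))
                 \/ INR L <= rho c (f z)) HP) as [p Hp].
  { intros n L. exact (not_lipschitz_on_steep_or_far rho hrho f _ c L (Hy n)). }
  (* On the ball where [f] is [K]-Lipschitz around the cluster point [p], neither
     kind of witness can occur once [L] is large. *)
  destruct (Hf p) as [r [Hr [K [HK HKr]]]].
  destruct (inv_INR_S_eventually_lt (r / 2)) as [N1 HN1]; [lra|].
  destruct (INR_eventually_gt (K + rho c (f p) + K * r)) as [N2 HN2].
  destruct (Hp (Nat.max N1 N2) (r / 2)) as [z [L [HL [Hzp Hz]]]]; [lra|].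
  specialize (HN1 L ltac:(lia)). specialize (HN2 L ltac:(lia)).
  rewrite S_INR in HN1. rewrite S_INR in Hz.
  rewrite (metric_sym hd z p) in Hzp.
  assert (Hpz : ball_d d p r z) by (unfold ball_d; lra).
  pose proof (metric_nonneg hrho c (f p)).
  assert (0 <= K * r) by (apply Rmult_le_pos; lra).
  destruct Hz as [[b [Hzb Hb]] | Hz].
  - assert (Hpb : ball_d d p r b) by (unfold ball_d; pose proof (metric_triangle hd p z b); lra).
    pose proof (HKr z b Hpz Hpb). pose proof (metric_nonneg hd z b). nra.
  - assert (Hpp : ball_d d p r p) by (unfold ball_d; rewrite (metric_diag hd); lra).
    pose proof (HKr p z Hpp Hpz). pose proof (metric_triangle hrho c (f p) (f z)).
    assert (K * d p z <= K * r) by (apply Rmult_le_compat_l; unfold ball_d in Hpz; lra).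
    lra.
Qed.

Lemma SULL_bounded_along_BQC_seq (x : nat -> X) (G : X -> R) :
  strongly_unif_loc_bounded d -> cofinally_BQC_seq d x ->
  strongly_unif_loc_lipschitz d Rmetric G ->
  exists M, forall m, exists j, (m <= j)%nat /\ G (x j) <= M.
Proof.
  intros [delta1 [Hdelta1 Hbnd]] Hx [delta2 [Hdelta2 Hlip]].
  set (eta := Rmin delta1 delta2).
  destruct (Hx eta) as [N [HNinf HNchain]]; [apply Rmin_pos; assumption|].
  destruct (HNinf 0%nat) as [j0 [_ Hj0]].
  destruct (Hbnd (x j0)) as [M HM], (Hlip (x j0)) as [K [HK HKlip]].
  exists (G (x j0) + K * M). intros m.
  destruct (HNinf m) as [j [Hj HjN]]. exists j. split; [exact Hj|].
  pose proof (HNchain j0 j Hj0 HjN) as Hchain.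
  assert (Hd : d (x j0) (x j) <= M).
  { apply HM; [apply eps_chain_refl|]. apply eps_chain_le with eta; [apply Rmin_l | exact Hchain]. }
  assert (HG : Rmetric (G (x j0)) (G (x j)) <= K * d (x j0) (x j)).
  { apply HKlip; [apply eps_chain_refl|]. apply eps_chain_le with eta; [apply Rmin_r | exact Hchain]. }
  unfold Rmetric in HG. rewrite Rabs_minus_sym in HG.
  pose proof (Rle_abs (G (x j) - G (x j0))).
  assert (K * d (x j0) (x j) <= K * M) by (apply Rmult_le_compat_l; assumption).
  lra.
Qed.

Section Bump.
Variable x : nat -> X.
Hypothesis no_cluster : forall p, ~ cluster_point d x p.

Definition tent (j : nat) (z : X) : R := INR j * Rmax 0 (1 - INR (S j) * d z (x j)).

Lemma tent_nonneg j z : 0 <= tent j z.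
Proof. apply Rmult_le_pos; [apply pos_INR | apply Rmax_l]. Qed.

Lemma tent_center j : tent j (x j) = INR j.
Proof.
  unfold tent. rewrite (metric_diag hd), Rmult_0_r, Rminus_0_r, Rmax_right by lra. ring.
Qed.

Lemma tent_lipschitz j a b : Rabs (tent j a - tent j b) <= INR j * INR (S j) * d a b.
Proof.
  pose proof (pos_INR j). pose proof (pos_INR (S j)).
  unfold tent. rewrite <- Rmult_minus_distr_l, Rabs_mult, (Rabs_right (INR j)) by lra.
  rewrite Rmult_assoc. apply Rmult_le_compat_l; [lra|].
  eapply Rle_trans; [apply Rabs_Rmax_0_sub_le|].
  replace (1 - INR (S j) * d a (x j) - (1 - INR (S j) * d b (x j)))
    with (INR (S j) * (d b (x j) - d a (x j))) by ring.
  rewrite Rabs_mult, (Rabs_right (INR (S j))) by lra.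
  apply Rmult_le_compat_l; [lra|].
  rewrite (metric_sym hd a b). apply (metric_dist_diff_le hd).
Qed.

Lemma tents_locally_finite z :
  exists r, 0 < r /\ exists A, forall w, d z w < r -> forall j, (A < j)%nat -> tent j w = 0.
Proof.
  destruct (not_all_ex_not _ _ (no_cluster z)) as [e He].
  destruct (imply_to_and _ _ He) as [He0 Hfar].
  destruct (not_all_ex_not _ _ Hfar) as [m Hm].
  destruct (inv_INR_S_eventually_lt (e / 2)) as [N HN]; [lra|].
  exists (e / 2). split; [lra|]. exists (Nat.max m N). intros w Hw j Hj.
  assert (Hxj : e <= d (x j) z).
  { apply Rnot_lt_le. intros Hlt. apply Hm. exists j. split; [lia | exact Hlt]. }
  specialize (HN j ltac:(lia)).
  assert (Hwj : / INR (S j) <= d w (x j)).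
  { pose proof (metric_triangle hd z w (x j)). rewrite (metric_sym hd z (x j)) in *. lra. }
  assert (1 <= INR (S j) * d w (x j)).
  { rewrite <- (Rinv_r (INR (S j))) by (apply not_0_INR; lia).
    apply Rmult_le_compat_l; [apply pos_INR | exact Hwj]. }
  unfold tent. rewrite Rmax_left by lra. ring.
Qed.

Lemma tents_eventually_zero z : exists A, forall j, (A < j)%nat -> tent j z = 0.
Proof.
  destruct (tents_locally_finite z) as [r [Hr [A HA]]].
  exists A. apply HA. rewrite (metric_diag hd). exact Hr.
Qed.

Definition bump_range (z : X) : nat :=
  proj1_sig (constructive_indefinite_description _ (tents_eventually_zero z)).

(* By [bump_eq], truncating at any index beyond which the tents vanish gives the
   same value, so [bump] is the (locally finite) sum of all the tents. *)
Definition bump (z : X) : R := sum_f_R0 (fun j => tent j z) (bump_range z).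

Lemma bump_eq w A :
  (forall j, (A < j)%nat -> tent j w = 0) -> bump w = sum_f_R0 (fun j => tent j w) A.
Proof.
  intros HA. unfold bump, bump_range.
  destruct (constructive_indefinite_description _ _) as [B HB]. simpl.
  rewrite <- (sum_f_R0_stable _ B HB (Nat.max A B)), (sum_f_R0_stable _ A HA (Nat.max A B))
    by lia.
  reflexivity.
Qed.

Lemma bump_locally_lipschitz : locally_lipschitz d Rmetric bump.
Proof.
  intros z. destruct (tents_locally_finite z) as [r [Hr [A HA]]].
  exists r. split; [exact Hr|].
  exists (sum_f_R0 (fun j => INR j * INR (S j)) A). split.
  { apply cond_pos_sum. intros j. apply Rmult_le_pos; apply pos_INR. }
  intros a b Ha Hb. unfold Rmetric, ball_d in *.
  rewrite (bump_eq a A (HA a Ha)), (bump_eq b A (HA b Hb)), <- minus_sum, Rmult_comm, scal_sum.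
  eapply Rle_trans; [apply Rsum_abs|].
  apply sum_growing. intros j. apply tent_lipschitz.
Qed.

Lemma bump_ge_index j : INR j <= bump (x j).
Proof.
  destruct (tents_eventually_zero (x j)) as [A HA].
  rewrite (bump_eq _ (Nat.max A j)) by (intros k Hk; apply HA; lia).
  rewrite <- tent_center. apply (sum_f_R0_ge_term (fun k => tent k (x j))); [|lia].
  intros k. apply tent_nonneg.
Qed.

End Bump.

Lemma cofinally_BQ_complete_of_SULL_majorants :
  strongly_unif_loc_bounded d ->
  (forall F : X -> R, locally_lipschitz d Rmetric F ->
     exists G, strongly_unif_loc_lipschitz d Rmetric G /\ forall z, F z <= G z + 1) ->
  cofinally_BQ_complete d.
Proof.
  intros Hbnd Hmaj x Hx. apply NNPP. intros Hn.
  assert (no_cluster : forall p, ~ cluster_point d x p) by (intros p Hp; apply Hn; exists p; exact Hp).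
  destruct (Hmaj (bump x no_cluster) (bump_locally_lipschitz x no_cluster)) as [G [HG HGF]].
  destruct (SULL_bounded_along_BQC_seq x G Hbnd Hx HG) as [M HM].
  destruct (INR_eventually_gt (M + 1)) as [m Hm].
  destruct (HM m) as [j [Hj HGj]].
  pose proof (bump_ge_index x no_cluster j). pose proof (HGF (x j)). specialize (Hm j Hj).
  lra.
Qed.

Lemma locally_lipschitz_continuous (F : X -> R) :
  locally_lipschitz d Rmetric F -> continuous_d d F.
Proof.
  intros HF z eps Heps. destruct (HF z) as [r [Hr [K [HK HKlip]]]].
  assert (Hq : 0 < eps / (K + 1)) by (apply Rdiv_lt_0_compat; lra).
  exists (Rmin r (eps / (K + 1))). split; [apply Rmin_pos; assumption|].
  intros w Hw. pose proof (Rmin_l r (eps / (K + 1))). pose proof (Rmin_r r (eps / (K + 1))).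
  assert (Hzz : ball_d d z r z) by (unfold ball_d; rewrite (metric_diag hd); exact Hr).
  assert (Hzw : ball_d d z r w) by (unfold ball_d; lra).
  pose proof (HKlip w z Hzw Hzz) as Hlip. unfold Rmetric in Hlip.
  rewrite (metric_sym hd w z) in Hlip.
  assert (K * d z w <= K * (eps / (K + 1))) by (apply Rmult_le_compat_l; lra).
  replace (K * (eps / (K + 1))) with (eps - eps / (K + 1)) in * by (field; lra).
  lra.
Qed.

Lemma locally_lipschitz_of_local_agree {Y : Type} (rho : Y -> Y -> R) (g : X -> Y) :
  (forall z, exists h r, 0 < r /\ locally_lipschitz d rho h /\
     forall w, d z w < r -> g w = h w) ->
  locally_lipschitz d rho g.
Proof.
  intros Hloc z. destruct (Hloc z) as [h [r [Hr [Hh Hgh]]]].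
  destruct (Hh z) as [r' [Hr' [K [HK HKlip]]]].
  exists (Rmin r r'). split; [apply Rmin_pos; assumption|].
  exists K. split; [exact HK|]. intros a b Ha Hb. unfold ball_d in Ha, Hb.
  pose proof (Rmin_l r r'). pose proof (Rmin_r r r').
  rewrite (Hgh a), (Hgh b) by lra. apply HKlip; unfold ball_d; lra.
Qed.

Lemma locally_lipschitz_plus (g h : X -> R) :
  locally_lipschitz d Rmetric g -> locally_lipschitz d Rmetric h ->
  locally_lipschitz d Rmetric (fun w => g w + h w).
Proof.
  intros Hg Hh z.
  destruct (Hg z) as [r1 [Hr1 [K1 [HK1 Hlip1]]]], (Hh z) as [r2 [Hr2 [K2 [HK2 Hlip2]]]].
  exists (Rmin r1 r2). split; [apply Rmin_pos; assumption|].
  exists (K1 + K2). split; [lra|]. intros a b Ha Hb. unfold ball_d, Rmetric in *.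
  pose proof (Rmin_l r1 r2). pose proof (Rmin_r r1 r2).
  pose proof (Hlip1 a b ltac:(lra) ltac:(lra)). pose proof (Hlip2 a b ltac:(lra) ltac:(lra)).
  replace (g a + h a - (g b + h b)) with ((g a - g b) + (h a - h b)) by ring.
  eapply Rle_trans; [apply Rabs_triang|]. lra.
Qed.

Lemma locally_lipschitz_affine (a c : R) (g : X -> R) :
  locally_lipschitz d Rmetric g -> locally_lipschitz d Rmetric (fun w => a * (c + g w)).
Proof.
  intros Hg z. destruct (Hg z) as [r [Hr [K [HK Hlip]]]].
  exists r. split; [exact Hr|]. exists (Rabs a * K).
  split; [apply Rmult_le_pos; [apply Rabs_pos | exact HK]|].
  intros u v Hu Hv. unfold Rmetric in *.
  replace (a * (c + g u) - a * (c + g v)) with (a * (g u - g v)) by ring.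
  rewrite Rabs_mult, Rmult_assoc. apply Rmult_le_compat_l; [apply Rabs_pos | auto].
Qed.

(* [setdist z A] is the distance from [z] to [A] truncated at [1]; the truncation
   makes it a supremum over a nonempty bounded set even when [A] is empty. *)
Definition setdist_values (z : X) (A : X -> Prop) (u : R) : Prop :=
  u = -1 \/ exists a, A a /\ u = - d z a.

Lemma setdist_values_bound z A : bound (setdist_values z A).
Proof.
  exists 0. intros u [Hu | [a [_ Hu]]]; [lra|]. pose proof (metric_nonneg hd z a). lra.
Qed.

Lemma setdist_values_inhabited z A : exists u, setdist_values z A u.
Proof. exists (-1). left. reflexivity. Qed.

Definition setdist (z : X) (A : X -> Prop) : R :=
  - proj1_sig (completeness _ (setdist_values_bound z A) (setdist_values_inhabited z A)).

Lemma setdist_lub z A : is_lub (setdist_values z A) (- setdist z A).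
Proof.
  unfold setdist. destruct (completeness _ _ _) as [m Hm]. simpl.
  rewrite Ropp_involutive. exact Hm.
Qed.

Lemma setdist_le z A a : A a -> setdist z A <= d z a.
Proof.
  intros Ha. destruct (setdist_lub z A) as [Hub _].
  assert (- d z a <= - setdist z A) by (apply Hub; right; exists a; auto). lra.
Qed.

Lemma setdist_ge z A l : (forall a, A a -> l <= d z a) -> l <= 1 -> l <= setdist z A.
Proof.
  intros Hl Hl1. destruct (setdist_lub z A) as [_ Hleast].
  assert (- setdist z A <= - l); [|lra].
  apply Hleast. intros u [Hu | [a [Ha Hu]]]; [lra|]. pose proof (Hl a Ha). lra.
Qed.

Lemma setdist_range z A : 0 <= setdist z A <= 1.
Proof.
  split.
  - apply setdist_ge; [intros a _; apply (metric_nonneg hd) | lra].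
  - destruct (setdist_lub z A) as [Hub _].
    assert (-1 <= - setdist z A) by (apply Hub; left; reflexivity). lra.
Qed.

Lemma setdist_mem z A : A z -> setdist z A = 0.
Proof.
  intros Hz. pose proof (setdist_le z A z Hz). rewrite (metric_diag hd) in *.
  pose proof (setdist_range z A). lra.
Qed.

Lemma setdist_lipschitz z w A : Rabs (setdist z A - setdist w A) <= d z w.
Proof.
  assert (Hone : forall z w, setdist w A - d z w <= setdist z A).
  { intros z0 w0. apply setdist_ge.
    - intros a Ha. pose proof (setdist_le w0 A a Ha).
      pose proof (metric_triangle hd w0 z0 a). rewrite (metric_sym hd w0 z0) in *. lra.
    - pose proof (setdist_range w0 A). pose proof (metric_nonneg hd z0 w0). lra. }
  pose proof (Hone z w). pose proof (Hone w z). rewrite (metric_sym hd w z) in *.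
  apply Rabs_le. lra.
Qed.

Lemma setdist_eq0_near z A : setdist z A = 0 -> forall eta, 0 < eta -> exists a, A a /\ d z a < eta.
Proof.
  intros H0 eta Heta. apply NNPP. intros Hfar.
  assert (Rmin eta 1 <= setdist z A); [|pose proof (Rmin_glb_lt eta 1 0); lra].
  apply setdist_ge; [|apply Rmin_r]. intros a Ha.
  pose proof (Rmin_l eta 1). apply Rnot_lt_le. intros Hlt. apply Hfar. exists a. split; [exact Ha | lra].
Qed.

Section Urysohn.
Variables A B : X -> Prop.

Definition urysohn (z : X) : R := setdist z A / (setdist z A + setdist z B).

Hypothesis apart : forall z, 0 < setdist z A + setdist z B.

Lemma urysohn_range z : 0 <= urysohn z <= 1.
Proof.
  pose proof (apart z). pose proof (setdist_range z A). pose proof (setdist_range z B).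
  unfold urysohn. split.
  - apply Rmult_le_pos; [lra | left; apply Rinv_0_lt_compat; lra].
  - apply Rmult_le_reg_r with (setdist z A + setdist z B); [lra|].
    unfold Rdiv. rewrite Rmult_assoc, Rinv_l by lra. lra.
Qed.

Lemma urysohn_on_A z : A z -> urysohn z = 0.
Proof. intros Hz. unfold urysohn. rewrite (setdist_mem z A Hz). unfold Rdiv. ring. Qed.

Lemma urysohn_on_B z : B z -> urysohn z = 1.
Proof.
  intros Hz. pose proof (apart z). unfold urysohn in *.
  rewrite (setdist_mem z B Hz) in *. rewrite Rplus_0_r in *. field. lra.
Qed.

Lemma urysohn_locally_lipschitz : locally_lipschitz d Rmetric urysohn.
Proof.
  intros z. set (s := setdist z A + setdist z B). assert (Hs : 0 < s) by apply apart.
  assert (Hlow : forall a, d z a < s / 4 -> s / 2 <= setdist a A + setdist a B).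
  { intros a Ha. pose proof (setdist_lipschitz z a A). pose proof (setdist_lipschitz z a B).
    pose proof (Rle_abs (setdist z A - setdist a A)). pose proof (Rle_abs (setdist z B - setdist a B)).
    unfold s in *. lra. }
  exists (s / 4). split; [lra|]. exists (/ (s / 2)). split; [left; apply Rinv_0_lt_compat; lra|].
  intros a b Ha Hb. unfold ball_d, Rmetric, urysohn in *.
  replace (/ (s / 2) * d a b) with (d a b / (s / 2)) by (unfold Rdiv; ring).
  apply Rabs_ratio_diff_le; try apply setdist_range; try apply setdist_lipschitz;
    try apply Hlow; auto; lra.
Qed.

End Urysohn.

Lemma continuous_level_sets_apart (f : X -> R) (c c' : R) :
  continuous_d d f -> c < c' ->
  forall z, 0 < setdist z (fun w => f w <= c) + setdist z (fun w => c' <= f w).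
Proof.
  intros Hf Hcc' z.
  pose proof (setdist_range z (fun w => f w <= c)). pose proof (setdist_range z (fun w => c' <= f w)).
  apply Rnot_le_lt. intros Hle.
  destruct (Hf z ((c' - c) / 2)) as [delta [Hdelta Hnear]]; [lra|].
  destruct (setdist_eq0_near z (fun w => f w <= c) ltac:(lra) delta Hdelta) as [a [Ha Hza]].
  destruct (setdist_eq0_near z (fun w => c' <= f w) ltac:(lra) delta Hdelta) as [b [Hb Hzb]].
  destruct (Rabs_def2 _ _ (Hnear a Hza)), (Rabs_def2 _ _ (Hnear b Hzb)). lra.
Qed.

Section Staircase.
Variables (f : X -> R) (e : R).
Hypotheses (f_cont : continuous_d d f) (e_pos : 0 < e).

Definition level (z : X) : Z := Zfloor (f z / e).

Lemma level_spec z : IZR (level z) * e <= f z < (IZR (level z) + 1) * e.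
Proof.
  unfold level. destruct (Zfloor_bound (f z / e)) as [Hlo Hhi].
  set (q := f z / e) in *. replace (f z) with (q * e) by (unfold q; field; lra).
  split; [apply Rmult_le_compat_r | apply Rmult_lt_compat_r]; lra.
Qed.

Definition step (k : Z) : X -> R :=
  urysohn (fun w => f w <= IZR k * e) (fun w => (IZR k + 1) * e <= f w).

Lemma step_apart k :
  forall z, 0 < setdist z (fun w => f w <= IZR k * e) + setdist z (fun w => (IZR k + 1) * e <= f w).
Proof. apply continuous_level_sets_apart; [exact f_cont | lra]. Qed.

Lemma step_below k w : f w <= IZR k * e -> step k w = 0.
Proof. exact (urysohn_on_A _ _ w). Qed.

Lemma step_above k w : (IZR k + 1) * e <= f w -> step k w = 1.
Proof. exact (urysohn_on_B _ _ (step_apart k) w). Qed.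

(* Up to the factor [e], the integer part of [staircase] follows the level of
   [f] and the fractional part interpolates continuously between levels. *)
Definition staircase (z : X) : R := e * (IZR (level z) + step (level z) z).

Lemma staircase_close z : Rabs (f z - staircase z) <= e.
Proof.
  pose proof (level_spec z). pose proof (urysohn_range _ _ (step_apart (level z)) z).
  unfold staircase, step in *. apply Rabs_le. nra.
Qed.

Lemma staircase_local z w :
  Rabs (f w - f z) < e ->
  staircase w = e * (IZR (level z) - 1
                     + (step (level z - 1) w + step (level z) w + step (level z + 1) w)).
Proof.
  intros Hfw. apply Rabs_def2 in Hfw.
  pose proof (level_spec z) as Hz. pose proof (level_spec w) as Hw.
  assert (Hup : (level w < level z + 2)%Z).
  { apply lt_IZR. rewrite plus_IZR. apply Rmult_lt_reg_r with e; lra. }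
  assert (Hdown : (level z - 2 < level w)%Z).
  { apply lt_IZR. rewrite minus_IZR. apply Rmult_lt_reg_r with e; lra. }
  unfold staircase.
  assert (Hcases : (level w = level z - 1 \/ level w = level z \/ level w = level z + 1)%Z) by lia.
  destruct Hcases as [E | [E | E]]; rewrite E in *.
  - rewrite minus_IZR in Hw.
    rewrite (step_below (level z) w), (step_below (level z + 1) w), minus_IZR;
      [ring | rewrite plus_IZR |]; lra.
  - rewrite (step_above (level z - 1) w), (step_below (level z + 1) w);
      [ring | rewrite plus_IZR | rewrite minus_IZR]; lra.
  - rewrite plus_IZR in Hw.
    rewrite (step_above (level z - 1) w), (step_above (level z) w), plus_IZR;
      [ring | | rewrite minus_IZR]; lra.
Qed.

Lemma staircase_locally_lipschitz : locally_lipschitz d Rmetric staircase.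
Proof.
  apply locally_lipschitz_of_local_agree. intros z.
  destruct (f_cont z e e_pos) as [r [Hr Hnear]].
  eexists; exists r. split; [exact Hr|]. split.
  2: { intros w Hw. apply staircase_local, Hnear, Hw. }
  apply locally_lipschitz_affine.
  repeat apply locally_lipschitz_plus; apply urysohn_locally_lipschitz, step_apart.
Qed.

End Staircase.

Lemma locally_lipschitz_dense (f : X -> R) :
  continuous_d d f -> forall eps, 0 < eps ->
  exists g, locally_lipschitz d Rmetric g /\ forall z, Rabs (f z - g z) < eps.
Proof.
  intros Hf eps Heps. exists (staircase f (eps / 2)). split.
  - apply staircase_locally_lipschitz; [exact Hf | lra].
  - intros z. pose proof (staircase_close f (eps / 2) Hf ltac:(lra) z). lra.
Qed.

End Metric.

Theorem mainTheorem1 (X : Type) (d : X -> X -> R) (hd : is_metric d) :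
  let P1 := cofinally_BQ_complete d in
  let P2 := strongly_unif_loc_bounded d /\
            (forall (Y : Type) (rho : Y -> Y -> R), is_metric rho ->
               forall f : X -> Y, locally_lipschitz d rho f ->
                 strongly_unif_loc_lipschitz d rho f) in
  let P3 := strongly_unif_loc_bounded d /\
            (forall f : X -> R, locally_lipschitz d Rmetric f ->
               strongly_unif_loc_lipschitz d Rmetric f) in
  let P4 := strongly_unif_loc_bounded d /\ SULL_uniformly_dense d in
  (P1 <-> P2) /\ (P1 <-> P3) /\ (P1 <-> P4).
Proof.
  intros P1 P2 P3 P4.
  assert (P1_P2 : P1 -> P2).
  { intros H. split; [exact (cofinally_BQ_complete_SULB d hd H) | exact (cofinally_BQ_complete_SULL d hd H)]. }
  assert (P2_P3 : P2 -> P3).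
  { intros [Hbnd H]. split; [exact Hbnd|]. intros f. apply H, Rmetric_is_metric. }
  assert (P3_P1 : P3 -> P1).
  { intros [Hbnd H]. apply (cofinally_BQ_complete_of_SULL_majorants d hd Hbnd).
    intros F HF. exists F. split; [exact (H F HF) | intros; lra]. }
  assert (P1_P4 : P1 -> P4).
  { intros H. split; [exact (cofinally_BQ_complete_SULB d hd H)|].
    intros f Hf eps Heps. destruct (locally_lipschitz_dense d hd f Hf eps Heps) as [g [Hg Hfg]].
    exists g. split; [|exact Hfg].
    exact (cofinally_BQ_complete_SULL d hd H R Rmetric Rmetric_is_metric g Hg). }
  assert (P4_P1 : P4 -> P1).
  { intros [Hbnd Hdense]. apply (cofinally_BQ_complete_of_SULL_majorants d hd Hbnd).
    intros F HF.
    destruct (Hdense F (locally_lipschitz_continuous d hd F HF) 1 Rlt_0_1) as [G [HG HFG]].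
    exists G. split; [exact HG|]. intros z.
    pose proof (Rle_abs (F z - G z)). specialize (HFG z). lra. }
  tauto.
Qed.
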